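(* In the curved-exam game described in the context: (1) For any two pure Nash equilibria $x^*,y^*$, either $x_i^*\le y_i^*$ for all $i$, or $x_i^*\ge y_i^*$ for all $i$. (2) If $x^*,y^*$ are pure Nash equilibria with $x_i^*\le y_i^*$ for all $i$, then $U_i(x^* )\ge U_i(y^* )$ for every student $i$. (3) If $x^{*(k)}$ is a $k$-don't care equilibrium and $x^{*(l)}$ is an $l$-don't care equilibrium with $l>k$, then every student $i$ has a strictly higher grade and at least as much leisure under $x^{*(l)}$ as under $x^{*(k)}$: $G_i(x^{*(l)})>G_i(x^{*(k)})$ and $1-x_i^{*(l)}\ge 1-x_i^{*(k)}$.
   Context: The curved-exam game: fix $n\ge2$, abilities $\alpha_1,\dots,\alpha_n\in(0,1)$, target mean $m\in(0,1)$. Student $i$ chooses $x_i\in[0,1]$; $\bar x=\frac1n\sum_j x_j$, $\bar x_{-i}=\frac1{n-1}\sum_{j\ne i}x_j$. Grade $G_i(x)=x_i+\max(m-\bar x,0)$ (not truncated at 1), leisure $1-x_i$; payoff $U_i(x)=G_i(x)^{\alpha_i}(1-x_i)^{1-\alpha_i}$. Let $\alpha_{(1)}\le\dots\le\alpha_{(n)}$ be the order statistics of the abilities. For $0\le k\le n$, a $k$-don't care equilibrium is a pure Nash equilibrium with an exam curve ($\bar x<m$) in which the $k$ students with the lowest abilities exert zero effort and the other $n-k$ students exert positive effort. *)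

From HB Require Import structures.
From mathcomp Require Import all_boot all_order all_algebra.
From mathcomp Require Import all_classical all_reals all_analysis.
Set Implicit Arguments. Unset Strict Implicit. Unset Printing Implicit Defensive.
Import Order.TTheory GRing.Theory Num.Theory.
Local Open Scope ring_scope.

Section CurvedExam.
Variables (R : realType) (n : nat).

Definition mean (x : 'I_n -> R) : R := (\sum_(j < n) x j) / n%:R.

(* grade G_i(x) = x_i + max(m - xbar, 0), not truncated *)
Definition grade (m : R) (x : 'I_n -> R) (i : 'I_n) : R :=
  x i + Num.max (m - mean x) 0.

Definition payoff (alpha : 'I_n -> R) (m : R) (x : 'I_n -> R) (i : 'I_n) : R :=
  (grade m x i) `^ (alpha i) * (1 - x i) `^ (1 - alpha i).

Definition deviate (x : 'I_n -> R) (i : 'I_n) (y : R) : 'I_n -> R :=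
  fun j => if j == i then y else x j.

Definition feasible (x : 'I_n -> R) : Prop := forall i, 0 <= x i <= 1.

Definition is_pure_NE (alpha : 'I_n -> R) (m : R) (x : 'I_n -> R) : Prop :=
  feasible x /\
  forall (i : 'I_n) (y : R), 0 <= y <= 1 ->
    payoff alpha m (deviate x i y) i <= payoff alpha m x i.

(* k-don't care equilibrium: pure NE with an exam curve (mean < m) in which
   a set S of k students, all of ability <= that of every student outside S
   (i.e. the k lowest-ability students), exert zero effort while all others
   exert positive effort. *)
Definition k_dont_care_eq (alpha : 'I_n -> R) (m : R) (k : nat)
    (x : 'I_n -> R) : Prop :=
  is_pure_NE alpha m x /\ mean x < m /\
  exists S : {set 'I_n},
    #|S| = k /\
    (forall i j, i \in S -> j \notin S -> alpha i <= alpha j) /\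
    (forall i, i \in S -> x i = 0) /\
    (forall j, j \notin S -> 0 < x j).

End CurvedExam.

From HB Require Import structures.
From mathcomp Require Import all_boot all_order all_algebra.
From mathcomp Require Import all_classical all_reals all_analysis.
From mathcomp Require Import ring lra.
Set Implicit Arguments.
Unset Strict Implicit.
Unset Printing Implicit Defensive.
Import Order.TTheory GRing.Theory Num.Theory.
Local Open Scope ring_scope.

(* Against fixed opponents, the grade of student [i] is [max ((1 - 1/n) z + q, z)]
   in her own effort [z], the first branch being the curved one.  The grade
   dominates both branches and equals the active one at an equilibrium, so an
   equilibrium effort maximizes the Cobb-Douglas payoff of the active affine
   branch, whose logarithm is concave, and satisfies its first-order conditions.
   Without a curve this forces [x i = alpha i]; with a curve [c = m - mean x > 0]
   it makes [x i] nonincreasing and the grade [x i + c] increasing in [c].  Hence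
   equilibria are ordered by their mean effort, a lower mean giving everyone
   lower effort and a higher payoff, and more zero-effort students force a lower
   mean, hence a larger curve. *)

Lemma ler_powR_mulr {R : realType} (a g g' u : R) :
  0 <= a -> 0 <= g -> g <= g' -> g `^ a * u `^ (1 - a) <= g' `^ a * u `^ (1 - a).
Proof.
move=> a0 g0 gg'; apply: ler_wpM2r; first exact: powR_ge0.
by apply: ge0_ler_powR; rewrite ?nnegrE //; apply: le_trans gg'.
Qed.

Lemma ln_le_subr1 {R : realType} (y : R) : 0 < y -> ln y <= y - 1.
Proof.
by move=> y0; have := @le_ln1Dx R (y - 1); rewrite (addrC 1) subrK; apply; lra.
Qed.

Section LinePayoff.
Variables (R : realType) (a p q : R).
Hypotheses (ha : 0 < a < 1) (hp : 0 < p) (hq : 0 <= q).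

Definition line_payoff (z : R) : R := (p * z + q) `^ a * (1 - z) `^ (1 - a).

(* [(p z + q) (1 - z)] times the derivative of the concave map [ln \o line_payoff] *)
Definition line_slope (z : R) : R := a * p * (1 - z) - (1 - a) * (p * z + q).

Lemma line_slopeD (x t : R) : line_slope (x + t) = line_slope x - p * t.
Proof. rewrite /line_slope; ring. Qed.

Lemma line_payoff_expR (z : R) : 0 < p * z + q -> z < 1 ->
  line_payoff z = expR (a * ln (p * z + q) + (1 - a) * ln (1 - z)).
Proof.
move=> g0 z1; rewrite /line_payoff /powR !gt_eqF ?subr_gt0 // expRD.
by congr (expR _ * expR _); ring.
Qed.

(* The tangent-line inequality [ln y <= y - 1], i.e. concavity of [ln \o line_payoff]. *)
Lemma line_payoff_lt (x z : R) : x < 1 -> z < 1 -> 0 < p * x + q -> 0 < p * z + q ->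
  0 < (z - x) * line_slope z -> line_payoff x < line_payoff z.
Proof.
move=> x1 z1 gx gz hslope; have /andP[a0 a1] := ha.
rewrite !line_payoff_expR // ltr_expR.
have ux : 0 < 1 - x by lra.
have uz : 0 < 1 - z by lra.
have lng := ln_le_subr1 (divr_gt0 gx gz).
have lnu := ln_le_subr1 (divr_gt0 ux uz).
rewrite ln_div ?posrE // in lng; rewrite ln_div ?posrE // in lnu.
have tangent : a * ((p * x + q) / (p * z + q) - 1) + (1 - a) * ((1 - x) / (1 - z) - 1)
    = - ((z - x) * line_slope z / ((p * z + q) * (1 - z))).
  by rewrite /line_slope; field; rewrite !gt_eqF.
have : 0 < (z - x) * line_slope z / ((p * z + q) * (1 - z)).
  by apply: divr_gt0 => //; apply: mulr_gt0.
have a1' : 0 <= 1 - a by lra.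
have := ler_wpM2l (ltW a0) lng; have := ler_wpM2l a1' lnu; lra.
Qed.

Lemma exists_small_step (u v : R) : 0 < u -> 0 < v ->
  exists2 t : R, 0 < t <= u & p * t <= v.
Proof.
move=> u0 v0; exists (Num.min u (v / p)).
  by rewrite lt_min u0 divr_gt0 //= ge_min lexx.
by rewrite -(ler_pdivlMl _ _ hp) mulrC ge_min lexx orbT.
Qed.

Lemma line_payoff_max (x : R) : 0 <= x <= 1 ->
  (forall z : R, 0 <= z <= 1 -> line_payoff z <= line_payoff x) ->
  [/\ x < 1, line_slope x <= 0 & 0 < x -> line_slope x = 0].
Proof.
move=> /andP[x0 x1] xmax; have /andP[a0 a1] := ha.
have gz (z : R) : 0 <= z -> 0 <= p * z + q.
  by move=> z0; rewrite addr_ge0 ?mulr_ge0 // ltW.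
have Fx : 0 < line_payoff x.
  apply: lt_le_trans (xmax 2^-1 _); last by apply/andP; lra.
  by rewrite mulr_gt0 // powR_gt0 //; [rewrite ltr_pwDl ?mulr_gt0 | lra].
have x1' : x < 1.
  rewrite lt_neqAle x1 andbT; apply: contraTneq Fx; rewrite /line_payoff => ->.
  by rewrite subrr powR0 ?mulr0 ?ltxx // gt_eqF ?subr_gt0.
have gx : 0 < p * x + q.
  rewrite lt_neqAle gz // andbT; apply: contraTneq Fx; rewrite /line_payoff => <-.
  by rewrite powR0 ?mul0r ?ltxx // gt_eqF.
have no_ascent (z : R) : 0 <= z <= 1 -> z < 1 -> 0 < p * z + q ->
    (z - x) * line_slope z <= 0.
  move=> zI z1 g; rewrite leNgt; apply/negP => /(line_payoff_lt x1' z1 gx g).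
  by apply/negP; rewrite -leNgt xmax.
have slope_le0 : line_slope x <= 0.
  rewrite leNgt; apply/negP => L0.
  have [t /andP[t0 tu] tv] :=
    @exists_small_step ((1 - x) / 2) (line_slope x / 2) ltac:(lra) ltac:(lra).
  have g : 0 < p * (x + t) + q by have := mulr_gt0 hp t0; lra.
  have := no_ascent (x + t) ltac:(lra) ltac:(lra) g; rewrite line_slopeD.
  have : 0 < t * (line_slope x - p * t) by rewrite mulr_gt0 //; lra.
  lra.
split=> // xpos; apply/eqP; rewrite eq_le slope_le0 leNgt; apply/negP => L0.
have [t /andP[t0 tu] tv] :=
  @exists_small_step (x / 2) (- line_slope x / 2) ltac:(lra) ltac:(lra).
have xt : 0 < x - t by lra.
have g : 0 < p * (x - t) + q by rewrite ltr_wpDr // mulr_gt0.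
have := no_ascent (x - t) ltac:(lra) ltac:(lra) g; rewrite line_slopeD.
have : 0 < t * - (line_slope x - p * - t) by rewrite mulr_gt0 //; lra.
lra.
Qed.

End LinePayoff.

Section CurveFoc.
Variables (R : realType) (a p : R).
Hypotheses (ha : 0 < a < 1) (hp : 0 < p).

(* Kuhn-Tucker conditions, for efforts in [0, 1), at effort [x] of a student
   whose grade [x + c] grows at rate [p] with her effort. *)
Definition curve_foc (c x : R) : Prop :=
  a * p * (1 - x) <= (1 - a) * (x + c) /\
  (0 < x -> a * p * (1 - x) = (1 - a) * (x + c)).

Lemma curve_foc_le (cx cy x y : R) : curve_foc cx x -> curve_foc cy y ->
  cy <= cx -> 0 <= y -> x <= y.
Proof.
move=> [_ xeq] [yle _] c yge0; have /andP[a0 a1] := ha.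
rewrite leNgt; apply/negP => yx; have := xeq (le_lt_trans yge0 yx).
have : a * p * (1 - x) < a * p * (1 - y) by rewrite ltr_pM2l ?mulr_gt0 //; lra.
have : (1 - a) * (y + cy) < (1 - a) * (x + cx) by rewrite ltr_pM2l; lra.
lra.
Qed.

Lemma curve_foc_le_alpha (c x : R) : p <= 1 -> 0 < c -> x <= 1 -> curve_foc c x -> x <= a.
Proof.
move=> p1 c0 x1 [_ xeq]; have /andP[a0 a1] := ha.
have [x0|/xeq] := lerP x 0; first lra.
have : a * p * (1 - x) <= a * (1 - x).
  by rewrite -mulrA ler_pM2l // ler_piMl //; lra.
have : (1 - a) * x < (1 - a) * (x + c) by rewrite ltr_pM2l; lra.
nra.
Qed.

Lemma curve_foc_grade_lt (ck cl xk xl : R) : curve_foc ck xk -> curve_foc cl xl ->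
  ck < cl -> 0 <= xl -> xl <= xk -> xk + ck < xl + cl.
Proof.
move=> [_ keq] [lle _] c xl0 xlk; have /andP[a0 a1] := ha.
have [->|xkxl] := eqVneq xk xl; first lra.
have xlxk : xl < xk by rewrite lt_neqAle eq_sym xkxl xlk.
suff : (1 - a) * (xk + ck) < (1 - a) * (xl + cl) by rewrite ltr_pM2l // subr_gt0.
rewrite -keq; last lra.
have : a * p * (1 - xk) < a * p * (1 - xl) by rewrite ltr_pM2l ?mulr_gt0 //; lra.
lra.
Qed.

End CurveFoc.

Section Exam.
Variables (R : realType) (n : nat).
Implicit Types (x y : 'I_n -> R) (i : 'I_n).

Lemma deviate_id x i : deviate x i (x i) = x.
Proof. by apply/funext => j; rewrite /deviate; case: eqP => // ->. Qed.

Lemma deviate_at x i z : deviate x i z i = z.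
Proof. by rewrite /deviate eqxx. Qed.

Lemma sum_deviate x i z : \sum_j deviate x i z j = \sum_j x j - x i + z.
Proof.
rewrite (bigD1 i) //= [in RHS](bigD1 i) //= deviate_at.
rewrite (eq_bigr x) => [|j /negbTE ji]; last by rewrite /deviate ji.
ring.
Qed.

Lemma le_mean x y : (forall j, x j <= y j) -> mean x <= mean y.
Proof. by move=> xy; rewrite ler_wpM2r ?invr_ge0 // ler_sum. Qed.

Lemma payoff_le_of_mean_le (alpha : 'I_n -> R) m x y i :
  0 <= alpha i -> x i = y i -> 0 <= y i -> mean x <= mean y ->
  payoff alpha m y i <= payoff alpha m x i.
Proof.
move=> a0 xy y0 mxy; rewrite /payoff xy; apply: ler_powR_mulr => //.
  by rewrite addr_ge0 // le_max lexx orbT.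
by rewrite /grade xy lerD2l le_max2 // lerD2l lerN2.
Qed.

End Exam.

Section Equilibria.
Variables (R : realType) (n : nat) (alpha : 'I_n -> R) (m : R).
Hypotheses (hn : (2 <= n)%N) (halpha : forall i, 0 < alpha i < 1).
Implicit Types (x y : 'I_n -> R) (i : 'I_n).

Local Notation rate := (1 - n%:R^-1 : R).

Lemma rate_gt0 : 0 < rate.
Proof. by rewrite subr_gt0 invf_lt1 ?ltr1n ?ltr0n // (ltn_trans _ hn). Qed.

Lemma rate_le1 : rate <= 1.
Proof. by rewrite lerBlDr lerDl invr_ge0. Qed.

Definition curve_base x i : R := m - (\sum_j x j - x i) / n%:R.

Lemma natr_n_neq0 : n%:R != 0 :> R.
Proof. by rewrite pnatr_eq0 -lt0n (ltn_trans _ hn). Qed.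

Lemma grade_deviate x i z :
  grade m (deviate x i z) i = Num.max (rate * z + curve_base x i) z.
Proof.
rewrite /grade /mean sum_deviate deviate_at addr_maxr addr0 /curve_base.
by congr Num.max; field; rewrite natr_n_neq0.
Qed.

Lemma curve_baseE x i : curve_base x i = n%:R^-1 * x i + (m - mean x).
Proof. by rewrite /curve_base /mean; field; rewrite natr_n_neq0. Qed.

Lemma curve_base_rate x i : rate * x i + curve_base x i = x i + (m - mean x).
Proof. by rewrite curve_baseE; ring. Qed.

Lemma NE_payoff_max x i z : is_pure_NE alpha m x -> 0 <= z <= 1 ->
  Num.max (rate * z + curve_base x i) z `^ alpha i * (1 - z) `^ (1 - alpha i) <=
  Num.max (rate * x i + curve_base x i) (x i) `^ alpha i * (1 - x i) `^ (1 - alpha i).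
Proof.
move=> [_ ne] zI; have := ne i z zI.
have -> : payoff alpha m x i = payoff alpha m (deviate x i (x i)) i by rewrite deviate_id.
by rewrite /payoff !grade_deviate !deviate_at.
Qed.

Lemma NE_curve_foc x i : is_pure_NE alpha m x -> mean x < m ->
  curve_foc (alpha i) rate (m - mean x) (x i).
Proof.
move=> ne curved; have /andP[x0 _] := ne.1 i.
have base_rate := curve_base_rate x i.
have base0 : 0 <= curve_base x i.
  by rewrite curve_baseE addr_ge0 ?mulr_ge0 ?invr_ge0 // subr_ge0 ltW.
have [|_ slope_le0 slope_eq0] := line_payoff_max (halpha i) rate_gt0 base0 (ne.1 i).
  move=> z zI; have /andP[z0 _] := zI.
  have := NE_payoff_max i ne zI; rewrite [in X in _ <= X]max_l; last first.
    by rewrite base_rate lerDl subr_ge0 ltW.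
  apply: le_trans; apply: ler_powR_mulr; last by rewrite le_max lexx.
    by have /andP[/ltW] := halpha i.
  by rewrite addr_ge0 // mulr_ge0 // ltW // rate_gt0.
rewrite /line_slope base_rate in slope_le0 slope_eq0.
split; first by rewrite -subr_le0.
by move=> /slope_eq0 /eqP; rewrite subr_eq0 => /eqP.
Qed.

(* The grade is at least the own effort, with equality at [x i]: so [x i]
   maximizes [z ^ alpha i * (1 - z) ^ (1 - alpha i)], i.e. [x i = alpha i]. *)
Lemma NE_no_curve x i : is_pure_NE alpha m x -> m <= mean x -> x i = alpha i.
Proof.
move=> ne uncurved.
have [|_ slope_le0 slope_eq0] := line_payoff_max (halpha i) ltr01 (lexx 0) (ne.1 i).
  move=> z zI; have /andP[z0 _] := zI; rewrite /line_payoff !mul1r !addr0.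
  have := NE_payoff_max i ne zI; rewrite [in X in _ <= X]max_r; last first.
    by rewrite curve_base_rate gerDl subr_le0.
  apply: le_trans; apply: ler_powR_mulr => //; last by rewrite le_max lexx orbT.
  by have /andP[/ltW] := halpha i.
have slopeE : line_slope (alpha i) 1 0 (x i) = alpha i - x i.
  by rewrite /line_slope; ring.
rewrite slopeE subr_le0 in slope_le0; rewrite slopeE in slope_eq0.
have /andP[a0 _] := halpha i.
by apply/eqP; rewrite eq_sym -subr_eq0 slope_eq0 // (lt_le_trans a0 slope_le0).
Qed.

Lemma NE_le_of_mean_le x y : is_pure_NE alpha m x -> is_pure_NE alpha m y ->
  mean x <= mean y -> forall i, x i <= y i.
Proof.
move=> nx ny mxy i; have /andP[_ x1] := nx.1 i; have /andP[y0 _] := ny.1 i.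
have [curved_x|uncurved_x] := ltrP (mean x) m; last first.
  by rewrite (NE_no_curve i nx uncurved_x) (NE_no_curve i ny (le_trans uncurved_x mxy)).
have focx := NE_curve_foc i nx curved_x.
have [curved_y|uncurved_y] := ltrP (mean y) m.
  apply: (curve_foc_le (halpha i) rate_gt0 focx (NE_curve_foc i ny curved_y)) => //.
  by rewrite lerD2l lerN2.
rewrite (NE_no_curve i ny uncurved_y).
by apply: (curve_foc_le_alpha (halpha i) rate_le1 _ x1 focx); rewrite subr_gt0.
Qed.

Lemma NE_total x y : is_pure_NE alpha m x -> is_pure_NE alpha m y ->
  (forall i, x i <= y i) \/ (forall i, y i <= x i).
Proof.
move=> nx ny; have [mxy|myx] := leP (mean x) (mean y).
  by left; apply: NE_le_of_mean_le.
by right; apply: NE_le_of_mean_le => //; apply: ltW.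
Qed.

Lemma NE_payoff_antimono x y : is_pure_NE alpha m x -> feasible y ->
  (forall j, x j <= y j) -> forall i, payoff alpha m y i <= payoff alpha m x i.
Proof.
move=> [_ ne] fy xy i; have /andP[y0 _] := fy i.
apply: le_trans (ne i (y i) (fy i)).
apply: payoff_le_of_mean_le; rewrite ?deviate_at //.
  by have /andP[/ltW] := halpha i.
by apply: le_mean => j; rewrite /deviate; case: eqP => [->|].
Qed.

Lemma dont_care_count_le k l xk xl :
  k_dont_care_eq alpha m k xk -> k_dont_care_eq alpha m l xl ->
  (forall j, xk j <= xl j) -> (l <= k)%N.
Proof.
move=> [_ [_ [Sk [<- [_ [_ pos_k]]]]]] [_ [_ [Sl [<- [_ [zero_l _]]]]]] xkl.
apply/subset_leq_card/fintype.subsetP => j jl; rewrite -[j \in Sk]negbK.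
by apply/negP => /pos_k; rewrite ltNge (le_trans (xkl j)) // zero_l.
Qed.

Lemma dont_care_grade_leisure k l xk xl : (k < l)%N ->
  k_dont_care_eq alpha m k xk -> k_dont_care_eq alpha m l xl ->
  forall i, grade m xk i < grade m xl i /\ 1 - xk i <= 1 - xl i.
Proof.
move=> kl dk dl i; have [nk [curved_k _]] := dk; have [nl [curved_l _]] := dl.
have mean_lt : mean xl < mean xk.
  rewrite ltNge; apply: contraL kl => /(NE_le_of_mean_le nk nl).
  by move=> /(dont_care_count_le dk dl); rewrite -leqNgt.
have xlk := NE_le_of_mean_le nl nk (ltW mean_lt) i.
split; last by rewrite lerD2l lerN2.
have gradeE x : mean x < m -> grade m x i = x i + (m - mean x).
  by move=> curved; rewrite /grade max_l // subr_ge0 ltW.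
rewrite !gradeE //; have /andP[xl0 _] := nl.1 i.
apply: (curve_foc_grade_lt (halpha i) rate_gt0 (NE_curve_foc i nk curved_k)
  (NE_curve_foc i nl curved_l)) => //.
by rewrite ltrD2l ltrN2.
Qed.

End Equilibria.

Theorem mainTheorem14 (R : realType) (n : nat) (alpha : 'I_n -> R) (m : R)
  (hn : (2 <= n)%N)
  (halpha : forall i, 0 < alpha i < 1)
  (hm : 0 < m < 1) :
  (* (1) pure Nash equilibria are totally ordered componentwise *)
  (forall x y : 'I_n -> R,
     is_pure_NE alpha m x -> is_pure_NE alpha m y ->
     (forall i, x i <= y i) \/ (forall i, y i <= x i)) /\
  (* (2) higher effort equilibrium gives lower payoff to everyone *)
  (forall x y : 'I_n -> R,
     is_pure_NE alpha m x -> is_pure_NE alpha m y ->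
     (forall i, x i <= y i) ->
     forall i, payoff alpha m y i <= payoff alpha m x i) /\
  (* (3) more don't-care students: strictly higher grades, weakly more leisure *)
  (forall (k l : nat) (xk xl : 'I_n -> R),
     (k < l)%N ->
     k_dont_care_eq alpha m k xk -> k_dont_care_eq alpha m l xl ->
     forall i, grade m xk i < grade m xl i /\ 1 - xk i <= 1 - xl i).
Proof.
split; first exact: NE_total.
split; first by move=> x y nx [fy _]; apply: NE_payoff_antimono.
exact: dont_care_grade_leisure.
Qed.
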